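(* Let $s\in\mathbb{Z}$ and let $Q\subseteq P$ be non-empty with $\mathrm{diam}_\infty(Q)\le\alpha_s$. Then the set of grid points $a_{\alpha_s}(Q)$ is contained in a face of $\square_{\alpha_s}$. Equivalently, for every simplex $\sigma=\{p_0,\ldots,p_k\}$ of $\mathcal{R}^\infty_{\alpha_s/2}$, the set $\{a_{\alpha_s}(p_0),\ldots,a_{\alpha_s}(p_k)\}$ is contained in a face of $\square_{\alpha_s}$.
   Context: Fix $d\ge1$, $\lambda>0$, $\alpha_s=\lambda2^s$, and let $G_{\alpha_s}\subset\mathbb{R}^d$ be a translate of the grid $\alpha_s\mathbb{Z}^d$. $\square_{\alpha_s}$ is the cubical complex of faces $\prod_j[x_j,x_j+m_j]$ with $x\in G_{\alpha_s}$, $m_j\in\{0,\alpha_s\}$. $P\subset\mathbb{R}^d$ is a finite point set; for $p\in P$, $a_{\alpha_s}(p)$ is the point of $G_{\alpha_s}$ whose Voronoi cell (the cube of side $\alpha_s$ centered at it) contains $p$, assumed unique. $\mathrm{diam}_\infty$ is the diameter in the $L_\infty$-norm. $\mathcal{R}^\infty_\alpha$ denotes the Rips complex of $P$ at scale $2\alpha$ in the $L_\infty$-norm: the simplicial complex whose simplices are the non-empty subsets of $P$ of $L_\infty$-diameter at most $2\alpha$. *)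

From mathcomp Require Import all_boot all_order all_algebra.
From mathcomp Require Import reals.
Set Implicit Arguments. Unset Strict Implicit. Unset Printing Implicit Defensive.
Import Order.TTheory GRing.Theory Num.Theory.
Local Open Scope ring_scope.

Section Defs.
Variables (R : realType) (d : nat).
Definition point := {ffun 'I_d -> R}.

Definition alpha_s (lambda : R) (s : int) : R := lambda * (2 : R) ^ s.

Definition in_grid (alpha : R) (t : point) (x : point) : Prop :=
  exists k : 'I_d -> int, forall j, x j = t j + alpha * (k j)%:~R.

Definition in_voronoi (alpha : R) (g p : point) : Prop :=
  forall j, `|p j - g j| <= alpha / 2.

Definition linf_dist (p q : point) : R := \big[Num.max/0]_(j < d) `|p j - q j|.
Definition diam_inf (Q : seq point) : R :=
  \big[Num.max/0]_(p <- Q) \big[Num.max/0]_(q <- Q) linf_dist p q.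

(* the face prod_j [x_j, x_j + m_j] of the cubical complex, m_j in {0, alpha}
   encoded by a boolean *)
Definition in_face (alpha : R) (x : point) (m : 'I_d -> bool) (y : point) : Prop :=
  forall j, x j <= y j <= x j + (if m j then alpha else 0).

Definition contained_in_face (alpha : R) (t : point) (S : seq point) : Prop :=
  exists x : point, in_grid alpha t x /\
  exists m : 'I_d -> bool, forall y, y \in S -> in_face alpha x m y.
End Defs.

From mathcomp Require Import all_boot all_order all_algebra.
From mathcomp Require Import reals.
From mathcomp Require Import ring lra zify.
Import Order.TTheory GRing.Theory Num.Theory.
Local Open Scope ring_scope.

(* Uniqueness of the nearest grid point forces every point strictly inside its
   Voronoi cell: on the boundary of a cell, reflecting its centre across the
   point gives a second grid point whose cell contains it.  Hence two points at
   distance at most alpha in coordinate j have grid points at distance less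
   than 2 alpha, i.e. at most alpha since both lie on alpha Z + t j.  So in
   every coordinate the grid points of Q fit in [x j, x j + alpha], where x j
   is their least j-th coordinate, and x is itself a grid point. *)

Set Implicit Arguments. Unset Strict Implicit.

Lemma alpha_s_gt0 (R : realType) (lambda : R) (s : int) :
  0 < lambda -> 0 < alpha_s lambda s.
Proof. by move=> lambda_gt0; rewrite /alpha_s mulr_gt0 // exprz_gt0. Qed.

Lemma seq_argmin_exists (disp : Order.disp_t) (T : orderType disp) (I : eqType)
    (f : I -> T) (x0 : I) (s : seq I) :
  x0 \in s -> exists2 m, m \in s & forall y, y \in s -> (f m <= f y)%O.
Proof.
move=> x0s; pose c := \big[Order.min/f x0]_(y <- s | y \in s) f y.
have [m ms cE] : exists2 m, m \in s & c = f m.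
  apply: (big_ind (fun v => exists2 m, m \in s & v = f m)); first by exists x0.
    move=> _ _ [m1 m1s ->] [m2 m2s ->].
    by case: (leP (f m1) (f m2)) => _; [exists m1 | exists m2].
  by move=> y ys; exists y.
by exists m => // y ys; rewrite -cE ge_bigmin_seq.
Qed.

Section Linf.
Variables (R : realType) (d : nat).

Lemma le_linf_dist (p q : point R d) j : `|p j - q j| <= linf_dist p q.
Proof. exact: (le_bigmax _ (fun j => `|p j - q j|)). Qed.

Lemma le_linf_dist_diam_inf (Q : seq (point R d)) p q :
  p \in Q -> q \in Q -> linf_dist p q <= diam_inf Q.
Proof.
move=> pQ qQ; apply: (@bigmax_sup_seq _ R _ _ _ p) => //.
exact: (@bigmax_sup_seq _ R _ _ _ q).
Qed.

End Linf.

Section Grid.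
Variables (R : realType) (d : nat) (alpha : R) (t : point R d).
Hypothesis alpha_gt0 : 0 < alpha.

Definition shift_coord (x : point R d) (j : 'I_d) (c : R) : point R d :=
  [ffun i => if i == j then x i + c else x i].

Lemma in_grid_shift x j (z : int) :
  in_grid alpha t x -> in_grid alpha t (shift_coord x j (alpha * z%:~R)).
Proof.
move=> [k xE]; exists (fun i => if i == j then k i + z else k i) => i.
by rewrite ffunE xE; case: (i == j) => //; rewrite intrD; ring.
Qed.

Lemma in_voronoi_reflect g p j :
  in_voronoi alpha g p -> in_voronoi alpha (shift_coord g j (2 * (p j - g j))) p.
Proof.
move=> gp i; rewrite ffunE; case: eqP => [->|_]; last exact: gp.
by rewrite (_ : _ - _ = - (p j - g j)) ?normrN ?gp //; ring.
Qed.

Lemma in_voronoi_interior g p j :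
  in_grid alpha t g -> in_voronoi alpha g p ->
  (forall g', in_grid alpha t g' -> in_voronoi alpha g' p -> g' = g) ->
  `|p j - g j| < alpha / 2.
Proof.
move=> gG gp g_uniq; rewrite lt_neqAle gp andbT; apply/eqP => on_boundary.
have reflE : 2 * (p j - g j) = alpha * (sgz (p j - g j))%:~R.
  by rewrite -sgrEz {1}[p j - g j]numEsg on_boundary; field.
have reflG : in_grid alpha t (shift_coord g j (2 * (p j - g j))).
  by rewrite reflE; exact: in_grid_shift.
have := congr1 (fun x : point R d => x j) (g_uniq _ reflG (in_voronoi_reflect j gp)).
rewrite /= ffunE eqxx => reflgj; have gpj0 : p j - g j = 0 by lra.
by move: on_boundary alpha_gt0; rewrite gpj0 normr0; lra.
Qed.

Lemma in_grid_dist_le x y j :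
  in_grid alpha t x -> in_grid alpha t y ->
  `|x j - y j| < 2 * alpha -> `|x j - y j| <= alpha.
Proof.
move=> [kx xE] [ky yE].
have -> : x j - y j = alpha * (kx j - ky j)%:~R by rewrite xE yE intrB; ring.
rewrite normrM gtr0_norm // mulrC ltr_pM2r // -[X in _ <= X]mul1r ler_pM2r //.
by rewrite -intr_norm -[2]/((2 : int)%:~R) -[1]/((1 : int)%:~R) ltr_int ler_int; lia.
Qed.

Lemma contained_in_face_of_close (S : seq (point R d)) :
  S != [::] -> (forall x, x \in S -> in_grid alpha t x) ->
  (forall x y j, x \in S -> y \in S -> `|x j - y j| <= alpha) ->
  contained_in_face alpha t S.
Proof.
case: S => [//|x0 S'] _ S_grid S_close; set S := x0 :: S'.
have /fin_all_exists[m mP] j :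
    exists m : point R d, m \in S /\ forall y, y \in S -> m j <= y j.
  have [m mS m_min] := seq_argmin_exists (fun y : point R d => y j) (mem_head x0 S').
  by exists m.
have /fin_all_exists[k kP] j : exists k : int, m j j = t j + alpha * k%:~R.
  by have [k mE] := S_grid _ (mP j).1; exists (k j).
exists [ffun j => m j j]; split.
  by exists k => j; rewrite ffunE.
exists (fun=> true) => y yS j; rewrite ffunE (mP j).2 //=.
by have := S_close _ _ j yS (mP j).1; rewrite ler_norml; lra.
Qed.

End Grid.

Theorem lemma6 (R : realType) (d : nat) (hd : (1 <= d)%N)
  (lambda : R) (hlambda : 0 < lambda) (s : int) (t : point R d)
  (P : seq (point R d)) (a : point R d -> point R d)
  (ha_grid : forall p, p \in P -> in_grid (alpha_s lambda s) t (a p))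
  (ha_cell : forall p, p \in P -> in_voronoi (alpha_s lambda s) (a p) p)
  (ha_uniq : forall p g, p \in P -> in_grid (alpha_s lambda s) t g ->
                in_voronoi (alpha_s lambda s) g p -> g = a p)
  (Q : seq (point R d)) (hQP : {subset Q <= P}) (hQ0 : Q != [::])
  (hdiam : diam_inf Q <= alpha_s lambda s) :
  contained_in_face (alpha_s lambda s) t [seq a q | q <- Q].
Proof.
have alpha_gt0 := alpha_s_gt0 s hlambda.
have interior p j : p \in Q -> `|p j - a p j| < alpha_s lambda s / 2.
  move=> /hQP pP; apply: (in_voronoi_interior alpha_gt0 j (ha_grid p pP) (ha_cell p pP)).
  by move=> g; exact: ha_uniq.
apply: contained_in_face_of_close => [||_ _ j /mapP[p pQ ->] /mapP[q qQ ->]].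
- by case: Q hQ0 {hQP hdiam interior}.
- by move=> _ /mapP[q /hQP qP ->]; exact: ha_grid.
apply: in_grid_dist_le (ha_grid _ (hQP _ pQ)) (ha_grid _ (hQP _ qQ)) _ => //.
have pq_close : `|p j - q j| <= alpha_s lambda s.
  exact: le_trans (le_linf_dist p q j) (le_trans (le_linf_dist_diam_inf pQ qQ) hdiam).
have := interior p j pQ; have := interior q j qQ.
have := ler_distD (q j) (p j) (a q j); have := ler_distD (p j) (a p j) (a q j).
by rewrite (distrC (a p j) (p j)); lra.
Qed.
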